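(* Let $\mathcal{H}$ be a nonzero Hilbert space, $n\ge 2$, and $i,j,k\in\{1,\dots,n\}$ with $j\neq i$ and $j\neq k$. Then in $\mathcal{C}(\mathcal{H}^{\otimes n})$, $$D_{i,k}=\exists_{\mathcal{H}_j}(D_{i,j}\cap D_{j,k}).$$
   Context: $\mathcal{H}^{\otimes n}=\mathcal{H}_1\otimes\cdots\otimes\mathcal{H}_n$ with each $\mathcal{H}_m=\mathcal{H}$; $\mathcal{C}(\cdot)$ is the lattice of closed subspaces. Fix an orthonormal basis $(a_i)_{i\in I}$ of $\mathcal{H}$; every $v\in\mathcal{H}^{\otimes n}$ is uniquely $\sum_{\alpha\in I^n}\lambda_\alpha\,a_{\alpha(1)}\otimes\cdots\otimes a_{\alpha(n)}$. For $F\subseteq\{1,\dots,n\}$ let $\mathrm{Perm}_n(F)$ be the permutations of $\{1,\dots,n\}$ fixing every element outside $F$, and $D_F$ the closed subspace of all such $v$ with $\lambda_\alpha=\lambda_{\alpha\sigma}$ for all $\sigma\in\mathrm{Perm}_n(F)$ and all $\alpha$, where $\alpha\sigma=(\alpha(\sigma(1)),\dots,\alpha(\sigma(n)))$ (this is independent of the basis). $D_{i,j}=D_{\{i,j\}}$; so $D_{i,i}=\mathcal{H}^{\otimes n}$. $\exists_{\mathcal{H}_j}S$ is the smallest closed subspace containing $S$ of the form ''$\mathcal{H}$ in the $j$-th factor tensored with a closed subspace $T$ of the tensor product of the remaining $n-1$ factors'' (via the canonical reordering isomorphism). *)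

From HB Require Import structures.
From mathcomp Require Import all_boot all_order all_algebra all_fingroup.
From mathcomp Require Import all_classical all_reals all_analysis.
From mathcomp Require Import complex.
Set Implicit Arguments. Unset Strict Implicit. Unset Printing Implicit Defensive.
Import Order.TTheory GRing.Theory Num.Theory.
Local Open Scope classical_set_scope.
Local Open Scope ring_scope.

(* Model: H = l^2(I) over C = R[i], with orthonormal basis (a_i)_{i in I};
   H^{(x) n} = l^2(I^n), positions 1..n are 'I_n (0..n-1).
   A vector of H^{(x) n} is its coefficient family alpha |-> lambda_alpha. *)

Section Tensor.
Variables (R : realType) (I : choiceType).

Definition sqmod (z : R[i]) : R := let: Complex a b := z in a ^+ 2 + b ^+ 2.

Definition norm2 (J : choiceType) (v : J -> R[i]) : \bar R :=
  \esum_(a in [set: J]) (sqmod (v a))%:E.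

Definition ell2 (J : choiceType) : set (J -> R[i]) :=
  [set v | (norm2 v < +oo)%E].

Definition closed_subspace (J : choiceType) (S : set (J -> R[i])) : Prop :=
  [/\ S `<=` @ell2 J,
      S (fun _ => 0),
      (forall u v, S u -> S v -> S (fun a => u a + v a)),
      (forall (c : R[i]) v, S v -> S (fun a => c * v a)) &
      (forall (u : nat -> J -> R[i]) v, (forall k, S (u k)) -> @ell2 J v ->
         (forall e : R, 0 < e -> exists N, forall k, (N <= k)%N ->
             (norm2 (fun a => (u k a - v a)%R) <= e%:E)%E) ->
         S v)].

Variable n : nat.

Definition tindex := 'I_n -> I.

Definition Perm_on (F : {set 'I_n}) (s : 'S_n) : Prop :=
  forall m, m \notin F -> s m = m.

Definition D (F : {set 'I_n}) : set (tindex -> R[i]) :=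
  [set v | @ell2 tindex v /\
     forall (s : 'S_n) (alpha : tindex), Perm_on F s ->
       v alpha = v (fun m => alpha (s m))].

Definition D2 (i j : 'I_n) := D [set i; j].

Definition rest (j : 'I_n) := {m : 'I_n | m != j}.
Definition rindex (j : 'I_n) := rest j -> I.

Definition glue (j : 'I_n) (a : I) (beta : rindex j) : tindex :=
  fun m => if @insub _ (fun m => m != j) (rest j) m is Some m' then beta m'
           else a.

(* H_j (x) T, for T a subspace of the tensor product of the other factors:
   v = sum_a a_a (x) t_a with t_a in T *)
Definition cyl (j : 'I_n) (T : set (rindex j -> R[i])) : set (tindex -> R[i]) :=
  [set v | @ell2 tindex v /\ forall a : I, T (fun beta => v (glue a beta))].

Definition is_cyl (j : 'I_n) (W : set (tindex -> R[i])) : Prop :=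
  exists T : set (rindex j -> R[i]), closed_subspace T /\ W = cyl (j:=j) T.

(* exists_{H_j} S : the smallest closed subspace of the form H_j (x) T
   containing S (the intersection of all of them) *)
Definition ex_j (j : 'I_n) (S : set (tindex -> R[i])) : set (tindex -> R[i]) :=
  \bigcap_(W in [set W | closed_subspace W /\ is_cyl j W /\ S `<=` W]) W.

End Tensor.

From Pilot Require Import Defs.
From HB Require Import structures.
From mathcomp Require Import all_boot all_order all_algebra all_fingroup.
From mathcomp Require Import all_classical all_reals all_analysis.
From mathcomp Require Import complex.
From mathcomp Require Import ring lra.
Import Order.TTheory GRing.Theory Num.Theory.
Local Open Scope classical_set_scope.
Local Open Scope ring_scope.
Set Implicit Arguments. Unset Strict Implicit. Unset Printing Implicit Defensive.

(* D_{i,k} is itself a cylinder H_j (x) T, with T the vectors of the remaining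
   factors that are symmetric in i and k, and it contains D_{i,j} /\ D_{j,k}
   because (i k) = (i j)(j k)(i j); this gives the inclusion of the existential
   in D_{i,k}.  Conversely, a vector lies in a cylinder H_j (x) T as soon as each
   of its slices {alpha_j = c} is the slice of a member of the cylinder, and the
   c-slice of v in D_{i,k} is the c-slice of a vector of D_{i,j} /\ D_{j,k}:
   extend it by moving a value c found in position i or k into position j. *)

Section SquaredModulus.
Variable R : realType.
Implicit Types x y : R[i].

Lemma sqmod_ge0 x : 0 <= sqmod x.
Proof. by case: x => a b /=; nra. Qed.

Lemma sqmod_eq0 x : sqmod x = 0 -> x = 0.
Proof.
case: x => a b /= ab0.
have a0 : a = 0 by nra.
have b0 : b = 0 by nra.
by rewrite a0 b0.
Qed.

Lemma sqmodM x y : sqmod (x * y) = sqmod x * sqmod y.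
Proof. by case: x => a b; case: y => c d /=; ring. Qed.

Lemma sqmodBC x y : sqmod (x - y) = sqmod (y - x).
Proof. by case: x => a b; case: y => c d /=; ring. Qed.

Lemma sqmodD_le x y : sqmod (x + y) <= 2 * sqmod x + 2 * sqmod y.
Proof.
case: x => a b; case: y => c d /=.
by have := sqr_ge0 (a - c); have := sqr_ge0 (b - d); nra.
Qed.

End SquaredModulus.

Section Ell2.
Variables (R : realType) (J : choiceType).
Implicit Types (u v : J -> R[i]) (h : J -> R).

Lemma sqmod_le_norm2 v a : ((sqmod (v a))%:E <= norm2 v)%E.
Proof.
apply: esum_ge; exists [set a]; first by split; [exact: finite_set1|].
by rewrite fsbig_set1.
Qed.

Lemma esum_natmul_lt_pinfty h N : (forall a, 0 <= h a) ->
  (\esum_(a in [set: J]) (h a)%:E < +oo)%E ->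
  (\esum_(a in [set: J]) (N%:R * h a)%:E < +oo)%E.
Proof.
move=> h_ge0 h_fin; elim: N => [|N IHN].
  by rewrite esum1 // => a _; rewrite mul0r.
rewrite (eq_esum (b := fun a => ((h a)%:E + (N%:R * h a)%:E)%E)); last first.
  by move=> a _; rewrite -EFinD mulrS mulrDl mul1r.
rewrite esumD; first exact: lte_add_pinfty.
- by move=> a _; rewrite lee_fin.
- by move=> a _; rewrite lee_fin mulr_ge0.
Qed.

Lemma ell2_le u v : ell2 v -> (forall a, sqmod (u a) <= sqmod (v a)) -> ell2 u.
Proof.
by move=> v_fin uv; apply: le_lt_trans v_fin; apply: le_esum => a _; rewrite lee_fin.
Qed.

Lemma ell2_0 : ell2 (fun _ : J => 0 : R[i]).
Proof. by rewrite /ell2 /norm2 /= esum1 // => a _; rewrite /sqmod /= expr0n /= addr0. Qed.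

Lemma ell2D u v : ell2 u -> ell2 v -> ell2 (fun a => u a + v a).
Proof.
move=> u_fin v_fin; rewrite /ell2 /norm2 /=.
apply: (@le_lt_trans _ _ (\esum_(a in [set: J]) (2%:R * sqmod (u a))%:E +
    \esum_(a in [set: J]) (2%:R * sqmod (v a))%:E)%E).
  rewrite -esumD => [|a _|a _]; rewrite ?lee_fin ?mulr_ge0 ?sqmod_ge0 //.
  by apply: le_esum => a _; rewrite -EFinD lee_fin sqmodD_le.
by apply: lte_add_pinfty; apply: esum_natmul_lt_pinfty => // a; exact: sqmod_ge0.
Qed.

Lemma ell2Z (c : R[i]) v : ell2 v -> ell2 (fun a => c * v a).
Proof.
move=> v_fin; rewrite /ell2 /norm2 /=.
apply: (@le_lt_trans _ _ (\esum_(a in [set: J])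
    ((Num.truncn (sqmod c)).+1%:R * sqmod (v a))%:E)%E).
  apply: le_esum => a _; rewrite lee_fin sqmodM.
  by apply: ler_wpM2r; [exact: sqmod_ge0 | exact/ltW/truncnS_gt].
by apply: esum_natmul_lt_pinfty => // a; exact: sqmod_ge0.
Qed.

Lemma ell2_mask (P : pred J) v : ell2 v -> ell2 (fun a => if P a then v a else 0).
Proof.
move=> v_fin; apply: (ell2_le v_fin) => a; case: (P a) => //.
by rewrite /sqmod /= expr0n /= addr0 sqmod_ge0.
Qed.

Lemma ell2_comp_inj (K : choiceType) (f : K -> J) v :
  injective f -> ell2 v -> ell2 (v \o f).
Proof.
rewrite /ell2 /norm2 /= => f_inj; apply: le_lt_trans.
rewrite -(esum_image _ _ (fun x => (sqmod (v x))%:E)); last by move=> ? ? _ _ /f_inj.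
rewrite (esum_mkcond (f @` setT)); apply: le_esum => x _.
by case: ifP => // _; rewrite lee_fin sqmod_ge0.
Qed.

(* Coordinates are l^2-continuous, so pointwise relations survive l^2 limits. *)
Lemma closed_subspace_rel_invariant (rel : J -> J -> Prop) :
  closed_subspace [set v : J -> R[i] | ell2 v /\ forall a b, rel a b -> v a = v b].
Proof.
split.
- by move=> v [].
- by split; [exact: ell2_0|].
- move=> u v [u_fin u_inv] [v_fin v_inv]; split; first exact: ell2D.
  by move=> a b ab; rewrite (u_inv _ _ ab) (v_inv _ _ ab).
- move=> c v [v_fin v_inv]; split; first exact: ell2Z.
  by move=> a b ab; rewrite (v_inv _ _ ab).
move=> u v u_inv v_fin u_cvg; split => // a b ab.
apply/eqP; rewrite -subr_eq0; apply/eqP/sqmod_eq0.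
set d := v a - v b; have := sqmod_ge0 d; rewrite le_eqVlt => /predU1P[<-//|d_gt0].
have [N uN_near] := u_cvg _ (divr_gt0 d_gt0 (ltr0n R 8)).
have := le_trans (sqmod_le_norm2 _ a) (uN_near N (leqnn N)).
have := le_trans (sqmod_le_norm2 _ b) (uN_near N (leqnn N)).
rewrite !lee_fin /= => near_b near_a.
have := sqmodD_le (v a - u N a) (u N b - v b).
have -> : v a - u N a + (u N b - v b) = d by rewrite /d ((u_inv N).2 _ _ ab); ring.
rewrite sqmodBC; lra.
Qed.

End Ell2.

Lemma tpermM_conj (T : finType) (x y z : T) : x != z -> y != z ->
  (tperm x y * tperm x z = tperm y z * tperm x y)%g.
Proof.
move=> xz yz; rewrite -(tpermJ_tperm xz yz) conjgE tpermV.
by rewrite -!mulgA tperm2 mulg1.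
Qed.

Lemma perm_on_pair n (x y : 'I_n) (s : 'S_n) :
  Perm_on [set x; y] s -> s = 1%g \/ s = tperm x y.
Proof.
move=> s_on; have s_fix m : m != x -> m != y -> s m = m.
  by move=> mx my; apply: s_on; rewrite in_set2 negb_or mx my.
have s_pair m : m \in [set x; y]%SET -> s m \in [set x; y]%SET.
  move=> m_xy; apply/negPn/negP => sm_xy.
  have /perm_inj sm_m := s_on _ sm_xy.
  by move: sm_xy; rewrite sm_m m_xy.
have s_id : s x = x -> s y = y -> s = 1%g.
  move=> sx sy; apply/permP => m; rewrite perm1.
  by case: (eqVneq m x) => [->//|mx]; case: (eqVneq m y) => [->//|my]; exact: s_fix.
have s_swap : s x = y -> s y = x -> s = tperm x y.
  move=> sx sy; apply/permP => m.
  by case: tpermP => [->|->|/eqP mx /eqP my] //; exact: s_fix.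
move: (s_pair x (set21 x y)) (s_pair y (set22 x y)); rewrite !in_set2.
move=> /orP[]/eqP sx /orP[]/eqP sy.
- have yx : y = x by apply: (@perm_inj _ s); rewrite sx sy.
  by left; apply: s_id => //; rewrite yx.
- by left; apply: s_id.
- by right; apply: s_swap.
- have yx : y = x by apply: (@perm_inj _ s); rewrite sx sy.
  by left; apply: s_id => //; rewrite -yx.
Qed.

Section IndexTuples.
Variables (R : realType) (I : choiceType) (n : nat).
Local Notation tix := (tindex I n).
Implicit Types (alpha : tix) (s t : 'S_n) (v : tix -> R[i]).

Definition reorder alpha s : tix := fun m => alpha (s m).

Lemma reorderM alpha s t : reorder (reorder alpha s) t = reorder alpha (t * s)%g.
Proof. by apply: funext => m; rewrite /reorder permM. Qed.

Lemma reorder1 alpha : reorder alpha 1 = alpha.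
Proof. by apply: funext => m; rewrite /reorder perm1. Qed.

Lemma reorder_inj s : injective (reorder^~ s).
Proof.
move=> alpha beta eq_ab.
by rewrite -[alpha]reorder1 -[beta]reorder1 -(mulVg s) -!reorderM eq_ab.
Qed.

Lemma reorder_tperm_id alpha (x y : 'I_n) :
  alpha x = alpha y -> reorder alpha (tperm x y) = alpha.
Proof. by move=> xy; apply: funext => m; rewrite /reorder; case: tpermP => // ->. Qed.

Definition swap_invariant (x y : 'I_n) v :=
  forall alpha, v alpha = v (reorder alpha (tperm x y)).

Lemma swap_invariantC (x y : 'I_n) v : swap_invariant x y v -> swap_invariant y x v.
Proof. by rewrite /swap_invariant tpermC. Qed.

Lemma D2P (x y : 'I_n) v : D2 x y v <-> ell2 v /\ swap_invariant x y v.
Proof.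
split=> -[v_fin v_inv]; split=> //.
  move=> alpha; apply: v_inv => m; rewrite in_set2 negb_or => /andP[mx my].
  by rewrite tpermD // eq_sym.
move=> s alpha /perm_on_pair[]->; rewrite -/(reorder alpha _) ?reorder1 //.
Qed.

Lemma D2_closed (x y : 'I_n) : closed_subspace (@D2 R I n x y).
Proof.
have -> : @D2 R I n x y = [set v | ell2 v /\ forall alpha beta,
    beta = reorder alpha (tperm x y) -> v alpha = v beta].
  apply/seteqP; split=> v.
    by move=> /D2P[v_fin v_inv]; split=> // alpha _ ->.
  by move=> [v_fin v_inv]; apply/D2P; split=> // alpha; exact: v_inv.
exact: closed_subspace_rel_invariant.
Qed.

Lemma D2_meet_sub (x y z : 'I_n) : y != x -> y != z ->
  @D2 R I n x y `&` @D2 R I n y z `<=` @D2 R I n x z.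
Proof.
move=> yx yz v [/D2P[v_fin xy_inv] /D2P[_ yz_inv]]; apply/D2P; split=> // alpha.
case: (eqVneq x z) => [<-|xz]; first by rewrite tperm1 reorder1.
rewrite xy_inv yz_inv xy_inv !reorderM.
by rewrite [tperm x y]tpermC tpermM_conj // -mulgA [tperm y x]tpermC tperm2 mulg1.
Qed.
End IndexTuples.

Section Slices.
Variables (R : realType) (I : choiceType) (n : nat) (j : 'I_n).
Local Notation tix := (tindex I n).
Implicit Types (alpha : tix) (beta : rindex I j) (v : tix -> R[i]).

Definition unglue alpha : rindex I j := fun m => alpha (val m).

Definition slice (a : I) v : rindex I j -> R[i] := fun beta => v (Defs.glue a beta).

Lemma glueE a alpha m : Defs.glue a (unglue alpha) m = if m == j then a else alpha m.
Proof.
by rewrite /Defs.glue; case: insubP => [m' /negbTE -> <-|/negPn/eqP ->]; rewrite ?eqxx.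
Qed.

Lemma glue_at a beta : Defs.glue a beta j = a.
Proof. by rewrite /Defs.glue insubF // eqxx. Qed.

Lemma glueK a : cancel (Defs.glue a) unglue.
Proof. by move=> beta; apply: funext => m; rewrite /unglue /Defs.glue valK. Qed.

Lemma unglueK alpha : Defs.glue (alpha j) (unglue alpha) = alpha.
Proof. by apply: funext => m; rewrite glueE; case: eqP => // ->. Qed.

Lemma ell2_slice a v : ell2 v -> ell2 (slice a v).
Proof. exact/ell2_comp_inj/can_inj/glueK. Qed.

Definition swap_slices (x y : 'I_n) : set (rindex I j -> R[i]) :=
  [set w | ell2 w /\
     forall alpha, w (unglue alpha) = w (unglue (reorder alpha (tperm x y)))].

Lemma swap_slices_closed (x y : 'I_n) : closed_subspace (swap_slices x y).
Proof.
have -> : swap_slices x y = [set w | ell2 w /\ forall beta gamma,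
    (exists alpha, beta = unglue alpha /\ gamma = unglue (reorder alpha (tperm x y))) ->
    w beta = w gamma].
  apply/seteqP; split=> w [w_fin w_inv]; split=> //.
    by move=> _ _ [alpha [-> ->]]; exact: w_inv.
  by move=> alpha; apply: w_inv; exists alpha.
exact: closed_subspace_rel_invariant.
Qed.

Lemma D2_cyl (x y : 'I_n) : j != x -> j != y -> @D2 R I n x y = cyl (swap_slices x y).
Proof.
move=> jx jy; have xy_j : tperm x y j = j by rewrite tpermD // eq_sym.
apply/seteqP; split=> v.
  move=> /D2P[v_fin v_inv]; split=> // a; split; first exact: ell2_slice.
  move=> alpha; rewrite [LHS]v_inv; congr v; apply: funext => m.
  by rewrite /reorder !glueE -{1}xy_j (inj_eq perm_inj).
move=> [v_fin v_slices]; apply/D2P; split=> // alpha.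
have := (v_slices (alpha j)).2 alpha; rewrite unglueK.
by rewrite -[in X in _ = v (Defs.glue X _) -> _]xy_j unglueK.
Qed.

Lemma ex_j_min (S W : set (tix -> R[i])) :
  closed_subspace W -> is_cyl j W -> S `<=` W -> ex_j j S `<=` W.
Proof. by move=> W_closed W_cyl SW v; apply. Qed.

(* Membership in any cylinder H_j (x) T only depends on the slices. *)
Lemma ex_j_slices (S : set (tix -> R[i])) v : ell2 v ->
  (forall a, exists2 u, S u & slice a u = slice a v) -> ex_j j S v.
Proof.
move=> v_fin v_slices W [_ [[T [_ ->]] SW]]; split=> // a.
have [u /SW[_ /(_ a) Tu] uv] := v_slices a.
by move: Tu; rewrite -/(slice a u) uv.
Qed.

End Slices.
Arguments slice {R I n} j a v.
Arguments swap_slices {R I n} j x y.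

Section SymmetricExtension.
Variables (R : realType) (I : choiceType) (n : nat).
Local Notation tix := (tindex I n).
Implicit Types (alpha : tix) (v : tix -> R[i]).

(* Extends the c-slice in position y of a vector v, symmetric in x and z, to a
   vector symmetric in x, y and z: a tuple not holding c at y but at x (resp. z)
   is first swapped into the c-slice. *)
Definition sym_ext (x y z : 'I_n) (c : I) v alpha : R[i] :=
  if alpha y == c then v alpha
  else if alpha x == c then v (reorder alpha (tperm x y))
  else if alpha z == c then v (reorder alpha (tperm z y)) else 0.

Variables (x y z : 'I_n) (c : I).
Hypotheses (yx : y != x) (yz : y != z).

Lemma sym_ext_slice v : slice y c (sym_ext x y z c v) = slice y c v.
Proof. by apply: funext => beta; rewrite /slice /sym_ext glue_at eqxx. Qed.

Lemma ell2_sym_ext v : ell2 v -> ell2 (sym_ext x y z c v).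
Proof.
move=> v_fin; have -> : sym_ext x y z c v = fun alpha =>
    (if alpha y == c then v alpha else 0) +
    ((if (alpha y != c) && (alpha x == c) then v (reorder alpha (tperm x y)) else 0) +
     (if [&& alpha y != c, alpha x != c & alpha z == c]
      then v (reorder alpha (tperm z y)) else 0)).
  apply: funext => alpha; rewrite /sym_ext.
  case: (alpha y == c); case: (alpha x == c); case: (alpha z == c);
  by rewrite /= ?addr0 ?add0r.
by apply: ell2D; [|apply: ell2D]; apply: ell2_mask => //;
  exact: ell2_comp_inj (@reorder_inj _ _ _) v_fin.
Qed.

Lemma sym_ext_swap v : swap_invariant x z v -> swap_invariant x y (sym_ext x y z c v).
Proof.
move=> v_inv alpha; set beta := reorder alpha (tperm x y).
have beta_y : beta y = alpha x by rewrite /beta /reorder tpermR.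
have beta_x : beta x = alpha y by rewrite /beta /reorder tpermL.
rewrite /sym_ext beta_y beta_x reorderM tperm2 reorder1.
case: (eqVneq (alpha y) c) => [ay|ay]; case: (eqVneq (alpha x) c) => [ax|ax] //.
  by rewrite /beta reorder_tperm_id // ax ay.
case: (eqVneq x z) => [<-|xz]; first by rewrite beta_x !ifN.
have -> : beta z = alpha z by rewrite /beta /reorder tpermD // eq_sym.
case: ifP => // _; rewrite [LHS]v_inv !reorderM [tperm z y]tpermC [tperm x y]tpermC.
by rewrite (tpermM_conj yx) 1?eq_sym // tpermC.
Qed.

Lemma sym_ext_comm v : swap_invariant x z v -> sym_ext x y z c v = sym_ext z y x c v.
Proof.
move=> v_inv; apply: funext => alpha; rewrite /sym_ext.
case: (alpha y == c) => //.
case: (eqVneq (alpha x) c) => [ax|ax]; case: (eqVneq (alpha z) c) => [az|az] //.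
case: (eqVneq x z) => [<-//|xz].
rewrite [RHS]v_inv reorderM [tperm x z]tpermC tpermM_conj 1?eq_sym //.
by rewrite -reorderM [reorder alpha (tperm z x)]reorder_tperm_id // az ax.
Qed.

End SymmetricExtension.

Lemma sym_ext_mem (R : realType) (I : choiceType) n (x y z : 'I_n) (c : I)
    (v : tindex I n -> R[i]) : y != x -> y != z -> D2 x z v ->
  (D2 x y `&` D2 y z) (sym_ext x y z c v).
Proof.
move=> yx yz /D2P[v_fin v_inv]; have u_fin := ell2_sym_ext x y z c v_fin.
split; apply/D2P; split=> //; first exact: sym_ext_swap.
rewrite sym_ext_comm //; apply/swap_invariantC/sym_ext_swap => //.
exact: swap_invariantC.
Qed.

Theorem mainTheorem14 (R : realType) (I : choiceType) (I_nonempty : inhabited I)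
    (n : nat) (hn : (2 <= n)%N) (i j k : 'I_n) (hji : j != i) (hjk : j != k) :
  @D2 R I n i k = @ex_j R I n j (@D2 R I n i j `&` @D2 R I n j k).
Proof.
apply/seteqP; split=> [v ik_v|].
  have /D2P[v_fin _] := ik_v.
  apply: ex_j_slices => // a; exists (sym_ext i j k a v).
    exact: sym_ext_mem.
  exact: sym_ext_slice.
apply: ex_j_min; [exact: D2_closed | | exact: D2_meet_sub].
exists (swap_slices j i k); split; [exact: swap_slices_closed | exact: D2_cyl].
Qed.
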